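(* Suppose $t_i^{(m)},g_i^{(m)}\in\mathbb{C}$ ($m,i\in\mathbb{Z}$) satisfy $$\left(i-\tfrac{n}{2}\right)t_i^{(m)}=\left(\tfrac{3m}{2}-n-i\right)g_{n-m+i}^{(n)}\quad\text{for all }m,n,i\in\mathbb{Z}.$$ Then $t_i^{(m)}=g_i^{(m)}=0$ for all $m,i\in\mathbb{Z}$. *)

From HB Require Import structures.
From mathcomp Require Import all_boot all_order all_algebra.
From mathcomp Require Import complex.
From mathcomp Require Import reals.
Set Implicit Arguments.
Unset Strict Implicit.
Unset Printing Implicit Defensive.
Import Order.TTheory GRing.Theory Num.Theory.

From HB Require Import structures.
From mathcomp Require Import all_boot all_order all_algebra.
From mathcomp Require Import complex.
From mathcomp Require Import reals.
From mathcomp Require Import ring zify.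
Import GRing.Theory Num.Theory.
Local Open Scope ring_scope.

(* Clearing the denominator 2 turns the relation into
   (2i - n) t^(m)_i = (3m - 2n - 2i) g^(n)_(n-m+i) with integer coefficients.
   Taking n = 2k, i = k kills the left side, so g^(2k)_j = 0 for j <> k.
   For given m, i choose k outside {i, m - i}: then g^(2k)_(2k-m+i) = 0 while
   2i - 2k <> 0, so t^(m)_i = 0.  Finally n = N, m = 2j + 1, i = 3j + 1 - N
   gives 0 = g^(N)_j, the coefficient being 1. *)

Lemma intr_neq0_mul_eq0 (F : numFieldType) (a : int) (x : F) :
  a != 0 -> a%:~R * x = 0 -> x = 0.
Proof.
move=> a_neq0 ax0; apply: (mulfI (_ : a%:~R != 0)); first by rewrite intr_eq0.
by rewrite ax0 mulr0.
Qed.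

Section Relation.

Context {F : numFieldType} {t g : int -> int -> F}.

Hypothesis relation : forall m n i : int,
  (i%:~R - n%:~R / 2) * t m i = (3 * m%:~R / 2 - n%:~R - i%:~R) * g n (n - m + i).

Lemma relation_int (m n i : int) :
  (2 * i - n)%:~R * t m i = (3 * m - 2 * n - 2 * i)%:~R * g n (n - m + i).
Proof.
have -> : (2 * i - n)%:~R = 2 * (i%:~R - n%:~R / 2) :> F.
  by rewrite intrB intrM; field.
have -> : (3 * m - 2 * n - 2 * i)%:~R = 2 * (3 * m%:~R / 2 - n%:~R - i%:~R) :> F.
  by rewrite !intrB !intrM; field.
have := congr1 ( *%R (2 : F)) (relation m n i).
by rewrite /= !mulrA.
Qed.

Lemma g_even_eq0 k j : j != k -> g (2 * k) j = 0.
Proof.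
move=> j_neq_k; have := relation_int (3 * k - j) (2 * k) k.
have -> : 2 * k - (3 * k - j) + k = j by ring.
have -> : 2 * k - 2 * k = 0 :> int by ring.
rewrite mul0r => /esym; apply: intr_neq0_mul_eq0; lia.
Qed.

Lemma t_eq0 m i : t m i = 0.
Proof.
pose k := Num.max i (m - i) + 1.
have := relation_int m (2 * k) i.
rewrite g_even_eq0 ?mulr0; last by lia.
by apply: intr_neq0_mul_eq0; lia.
Qed.

Lemma g_eq0 n j : g n j = 0.
Proof.
have := relation_int (2 * j + 1) n (3 * j + 1 - n).
have -> : n - (2 * j + 1) + (3 * j + 1 - n) = j by ring.
have -> : 3 * (2 * j + 1) - 2 * n - 2 * (3 * j + 1 - n) = 1 :> int by ring.
by rewrite t_eq0 mulr0 mul1r.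
Qed.

End Relation.

Theorem proposition2p2 (R : realType) (t g : int -> int -> R[i])
  (H : forall m n i : int,
     (i%:~R - n%:~R / 2) * t m i
     = (3 * m%:~R / 2 - n%:~R - i%:~R) * g n (n - m + i)) :
  forall m i : int, t m i = 0 /\ g m i = 0.
Proof.
by move=> m i; split; [exact: (@t_eq0 R[i] t g H) | exact: (@g_eq0 R[i] t g H)].
Qed.
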